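(* Let $n,m\ge 2$ and consider the LC orbit $\mathcal{O}(K_{n,m})$ of the complete bipartite graph, with isomorphic graphs identified. If $n\ne m$, the number of isomorphism classes of graphs in $\mathcal{O}(K_{n,m})$ is $6$; if $n=m$, it is $4$.
   Context: The local complement $c_v(G)$ complements the edges among the neighbours of $v$. $\mathcal{O}(G)$ is the set of all graphs on the labelled vertex set $V(G)$ obtainable from $G$ by finite sequences of local complements. *)

From mathcomp Require Import all_boot all_fingroup.
Set Implicit Arguments. Unset Strict Implicit. Unset Printing Implicit Defensive.

(* A graph on the (labelled) finite vertex set V is given by its set of
   ordered adjacent pairs; simple graphs are the symmetric irreflexive ones. *)
Definition graph (V : finType) := {set V * V}.

Definition adj (V : finType) (G : graph V) (x y : V) : bool := (x, y) \in G.

Definition simple_graph (V : finType) (G : graph V) : bool :=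
  [forall x, ~~ adj G x x] && [forall x, forall y, adj G x y == adj G y x].

Definition local_complement (V : finType) (v : V) (G : graph V) : graph V :=
  [set p : V * V |
     if [&& p.1 != p.2, adj G v p.1 & adj G v p.2] then ~~ adj G p.1 p.2
     else adj G p.1 p.2].

Definition lc_step (V : finType) : rel (graph V) :=
  fun G H => [exists v : V, H == local_complement v G].

Definition lc_orbit (V : finType) (G : graph V) : {set graph V} :=
  [set H | connect (@lc_step V) G H].

Definition isomorphic (V : finType) (G H : graph V) : bool :=
  [exists s : {perm V}, [forall x, forall y, adj G x y == adj H (s x) (s y)]].

Definition num_iso_classes (V : finType) (S : {set graph V}) : nat :=
  #|[set [set H in S | isomorphic G H] | G in S]|.

Definition side (n m : nat) (x : 'I_n + 'I_m) : bool :=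
  if x is inl _ then true else false.

Definition K_bip (n m : nat) : graph ('I_n + 'I_m)%type :=
  [set p : ('I_n + 'I_m) * ('I_n + 'I_m) | side p.1 != side p.2].

(* Every graph in the LC orbit of K_{n,m} is K_{n,m} itself, one of the two
   complete split graphs obtained by making one side a clique, a "hub" graph
   (one side a clique, plus a vertex h of the other side adjacent to everything,
   the remaining vertices of h's side being leaves at h), or a double star; this
   set of graphs is closed under local complementation and each of its members
   is reached from K_{n,m} in at most three steps.  Relabelling inside the sides
   identifies the graphs of each kind, and for n = m swapping the sides also
   identifies the two split graphs and the two kinds of hub graphs.  The numbers
   of universal vertices and of leaves, (0,0), (n,0), (m,0), (1,n-1), (1,m-1)
   and (0,n+m-2), are isomorphism invariants separating what remains. *)

From mathcomp Require Import all_boot all_fingroup zify.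
Set Implicit Arguments. Unset Strict Implicit. Unset Printing Implicit Defensive.

Lemma uniq_map_inj_in (T Y : eqType) (f : T -> Y) (s : seq T) :
  uniq (map f s) -> {in s &, injective f}.
Proof.
elim: s => //= z s IHs /andP [fz_s /IHs inj_s] x y.
rewrite !inE => /predU1P [-> | xs] /predU1P [-> | ys] // fxy.
- by move: fz_s; rewrite fxy map_f.
- by move: fz_s; rewrite -fxy map_f.
- exact: inj_s.
Qed.

Section ClassCount.

Variables (T : finType) (Y : eqType) (r : rel T) (f : T -> Y).
Hypotheses (r_refl : reflexive r) (r_sym : symmetric r) (r_trans : transitive r).
Hypothesis f_invariant : forall x y, r x y -> f x = f y.

Lemma card_classes (S : {set T}) (s : seq T) :
  {subset s <= S} -> {in S, forall x, has (r x) s} -> uniq (map f s) ->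
  #|[set [set y in S | r x y] | x in S]| = size s.
Proof.
move=> sS coverS uniq_fs.
have class_eq x y : r x y -> [set z in S | r x z] = [set z in S | r y z].
  move=> rxy; apply/setP => z; rewrite !inE; congr (_ && _).
  by apply/idP/idP; apply: r_trans; rewrite // r_sym.
have -> : [set [set y in S | r x y] | x in S] = [set [set y in S | r x y] | x in s].
  apply/setP => C; apply/imsetP/imsetP => -[x xS ->].
  - by case/hasP: (coverS x xS) => y ys /class_eq ->; exists y.
  - by exists x; rewrite ?sS.
rewrite card_in_imset; first exact/card_uniqP/(map_uniq uniq_fs).
move=> x y xs ys /setP /(_ y); rewrite !inE sS // r_refl => rxy.
exact: uniq_map_inj_in uniq_fs x y xs ys (f_invariant rxy).
Qed.

End ClassCount.

Lemma forall_notall (T : finType) (P : pred T) (s : seq T) :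
  ~~ all P s -> [forall x, P x] = false.
Proof. by apply: contraNF => /forallP P_all; apply/allP => x _. Qed.

Lemma cards_neq1 (T : finType) (A : {set T}) (s : seq T) :
  has (fun y => has (fun z => [&& y != z, y \in A & z \in A]) s) s -> (#|A| == 1) = false.
Proof.
case/hasP => y _ /hasP [z _ /and3P [yz yA zA]]; apply/negbTE/cards1P => -[x A1].
by move: yA zA yz; rewrite A1 !inE => /eqP -> /eqP ->; rewrite eqxx.
Qed.

Lemma ord_two k : 1 < k -> exists i j : 'I_k, i != j.
Proof. by move=> k_gt1; exists (Ordinal (ltnW k_gt1)), (Ordinal k_gt1). Qed.

Section Graphs.

Variable V : finType.
Implicit Types G H K : graph V.

Lemma isomorphicP G H :
  reflect (exists s : {perm V}, forall x y, adj G x y = adj H (s x) (s y))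
          (isomorphic G H).
Proof.
apply: (iffP existsP) => -[s hs]; exists s.
- by move=> x y; apply/eqP/(forallP (forallP hs x)).
- by apply/forallP => x; apply/forallP => y; rewrite hs.
Qed.

Lemma isomorphic_inj G H (f : V -> V) :
  injective f -> (forall x y, adj G x y = adj H (f x) (f y)) -> isomorphic G H.
Proof. by move=> f_inj hf; apply/isomorphicP; exists (perm f_inj) => x y; rewrite !permE. Qed.

Lemma isomorphic_refl : reflexive (@isomorphic V).
Proof. by move=> G; apply: (@isomorphic_inj _ _ id). Qed.

Lemma isomorphic_sym : symmetric (@isomorphic V).
Proof.
suff iso_sym G H : isomorphic G H -> isomorphic H G by move=> G H; apply/idP/idP; apply: iso_sym.
case/isomorphicP => s hs; apply: (@isomorphic_inj _ _ (s^-1)%g perm_inj) => x y.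
by rewrite hs !permKV.
Qed.

Lemma isomorphic_trans : transitive (@isomorphic V).
Proof.
move=> H G K /isomorphicP [s hs] /isomorphicP [t ht].
by apply/isomorphicP; exists (s * t)%g => x y; rewrite hs ht !permM.
Qed.

Definition universal G := [set x | [forall y, (y != x) ==> adj G x y]].
Definition leaves G := [set x | #|[set y | adj G x y]| == 1].
Definition signature G := (#|universal G|, #|leaves G|).

Lemma signature_iso G H : isomorphic G H -> signature G = signature H.
Proof.
case/isomorphicP => s hs; rewrite /signature.
rewrite -(card_preimset (universal H) (@perm_inj _ s)).
rewrite -(card_preimset (leaves H) (@perm_inj _ s)).
congr (_, _); apply: eq_card => x; rewrite !inE.
- apply/forallP/forallP => h y.
    by rewrite -(permKV s y) (inj_eq perm_inj) -hs; apply: h.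
  by have := h (s y); rewrite (inj_eq perm_inj) -hs.
- rewrite -(card_preimset [set y | adj H (s x) y] (@perm_inj _ s)).
  by congr (_ == 1); apply: eq_card => y; rewrite !inE hs.
Qed.

Lemma lc_orbit_refl G : G \in lc_orbit G.
Proof. by rewrite inE connect0. Qed.

Lemma lc_orbit_lc G H v : H \in lc_orbit G -> local_complement v H \in lc_orbit G.
Proof.
rewrite !inE => GH; apply: connect_trans GH _.
by apply: connect1; apply/existsP; exists v.
Qed.

Lemma lc_orbit_sub G (S : {set graph V}) :
  G \in S -> (forall H v, H \in S -> local_complement v H \in S) -> lc_orbit G \subset S.
Proof.
move=> GS S_lc; apply/subsetP => H; rewrite inE => /connectP [p + ->].
elim: p G GS => [|G' p IHp] G GS //= /andP [/existsP [v /eqP ->]].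
exact/IHp/S_lc.
Qed.

End Graphs.

Lemma inl_eqE (A B : eqType) (x y : A) : (inl x == inl y :> A + B) = (x == y).
Proof. by []. Qed.
Lemma inr_eqE (A B : eqType) (x y : B) : (inr x == inr y :> A + B) = (x == y).
Proof. by []. Qed.
Lemma inl_inr_eqE (A B : eqType) (x : A) (y : B) : (inl x == inr y :> A + B) = false.
Proof. by []. Qed.
Lemma inr_inl_eqE (A B : eqType) (x : A) (y : B) : (inr y == inl x :> A + B) = false.
Proof. by []. Qed.

(* Decides a boolean combination of equalities between vertices whose
   components are variables, by case analysis on each such equality. *)
Ltac case_eqs := repeat (match goal with
 | |- context[?u == ?u] => rewrite eqxx
 | H : is_true (?u != ?w) |- context[?u == ?w] => rewrite (negbTE H)
 | H : is_true (?u != ?w) |- context[?w == ?u] => rewrite [w == u]eq_sym (negbTE H)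
 | |- context[inl ?u == inl ?w] => rewrite inl_eqE
 | |- context[inr ?u == inr ?w] => rewrite inr_eqE
 | |- context[inl ?u == inr ?w] => rewrite inl_inr_eqE
 | |- context[inr ?u == inl ?w] => rewrite inr_inl_eqE
 | |- context[?u == ?w] => is_var u; is_var w; case: (eqVneq u w) => [?|?]; [subst|]
 end; simpl).

Definition graph_of_rel (V : finType) (e : rel V) : graph V :=
  [set p | (p.1 != p.2) && e p.1 p.2].

Lemma adj_graph_of_rel (V : finType) (e : rel V) x y :
  adj (graph_of_rel e) x y = (x != y) && e x y.
Proof. by rewrite /adj inE. Qed.

Lemma adj_K_bip n m x y : adj (K_bip n m) x y = (side x != side y).
Proof. by rewrite /adj inE. Qed.

Section Families.

Variables n m : nat.
Local Notation V := ('I_n + 'I_m)%type.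

Definition split_l : graph V := graph_of_rel (fun x y => side x || side y).
Definition split_r : graph V := graph_of_rel (fun x y => ~~ side x || ~~ side y).
Definition hub_l (a : 'I_n) : graph V :=
  graph_of_rel (fun x y => [|| x == inl a, y == inl a | ~~ side x && ~~ side y]).
Definition hub_r (b : 'I_m) : graph V :=
  graph_of_rel (fun x y => [|| x == inr b, y == inr b | side x && side y]).
Definition double_star (a : 'I_n) (b : 'I_m) : graph V :=
  let spoke x y := [|| (x == inl a) && side y, (x == inr b) && ~~ side y
                     | (x == inl a) && (y == inr b)] in
  graph_of_rel (fun x y => spoke x y || spoke y x).

Ltac lc_by_cases := apply/setP => -[[?|?] [?|?]];
  rewrite /local_complement !inE ?adj_K_bip ?adj_graph_of_rel /=; case_eqs; done.

Lemma lc_K_bip v : local_complement v (K_bip n m) = if v is inl _ then split_r else split_l.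
Proof. by case: v => ?; lc_by_cases. Qed.

Lemma lc_split_l v : local_complement v split_l = if v is inl a then hub_l a else K_bip n m.
Proof. by case: v => ?; lc_by_cases. Qed.

Lemma lc_split_r v : local_complement v split_r = if v is inr b then hub_r b else K_bip n m.
Proof. by case: v => ?; lc_by_cases. Qed.

Lemma lc_hub_l a v :
  local_complement v (hub_l a) =
  match v with inl i => if i == a then split_l else hub_l a | inr b => double_star a b end.
Proof. by case: v => i; [case: (eqVneq i a) => [->|?]|]; lc_by_cases. Qed.

Lemma lc_hub_r b v :
  local_complement v (hub_r b) =
  match v with inl a => double_star a b | inr j => if j == b then split_r else hub_r b end.
Proof. by case: v => j; [|case: (eqVneq j b) => [->|?]]; lc_by_cases. Qed.

Lemma lc_double_star a b v :
  local_complement v (double_star a b) =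
  match v with
  | inl i => if i == a then hub_r b else double_star a b
  | inr j => if j == b then hub_l a else double_star a b
  end.
Proof.
by case: v => [i|j]; [case: (eqVneq i a) => [->|?] | case: (eqVneq j b) => [->|?]];
  lc_by_cases.
Qed.

Definition lc_family : {set graph V} :=
  [set K_bip n m; split_l; split_r] :|: [set hub_l a | a : 'I_n]
  :|: [set hub_r b | b : 'I_m] :|: [set double_star a b | a : 'I_n, b : 'I_m].

Lemma lc_family_ind (P : graph V -> Prop) :
  P (K_bip n m) -> P split_l -> P split_r -> (forall a, P (hub_l a)) ->
  (forall b, P (hub_r b)) -> (forall a b, P (double_star a b)) ->
  forall G, G \in lc_family -> P G.
Proof.
move=> PK Pl Pr Phl Phr Pds G.
case/setUP => [/setUP [/setUP [|] | ] | ].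
- by rewrite !inE -orbA => /or3P [] /eqP ->.
- by case/imsetP => a _ ->.
- by case/imsetP => b _ ->.
- by case/imset2P => a b _ _ ->.
Qed.

Lemma K_bip_in_family : K_bip n m \in lc_family.
Proof. by rewrite !inE eqxx. Qed.
Lemma split_l_in_family : split_l \in lc_family.
Proof. by rewrite !inE eqxx !orbT. Qed.
Lemma split_r_in_family : split_r \in lc_family.
Proof. by rewrite !inE eqxx !orbT. Qed.
Lemma hub_l_in_family a : hub_l a \in lc_family.
Proof. by rewrite !inE imset_f ?orbT. Qed.
Lemma hub_r_in_family b : hub_r b \in lc_family.
Proof. by rewrite !inE imset_f ?orbT. Qed.
Lemma double_star_in_family a b : double_star a b \in lc_family.
Proof. by rewrite !inE imset2_f ?orbT. Qed.

Lemma lc_family_lc G v : G \in lc_family -> local_complement v G \in lc_family.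
Proof.
move: G; apply: lc_family_ind => *;
  rewrite ?lc_K_bip ?lc_split_l ?lc_split_r ?lc_hub_l ?lc_hub_r ?lc_double_star;
  case: v => *; try case: ifP => _;
  by rewrite ?K_bip_in_family ?split_l_in_family ?split_r_in_family ?hub_l_in_family
             ?hub_r_in_family ?double_star_in_family.
Qed.

Lemma lc_orbit_K_bip : 0 < n -> 0 < m -> lc_orbit (K_bip n m) = lc_family.
Proof.
move=> n_gt0 m_gt0; apply/eqP.
rewrite eqEsubset (lc_orbit_sub K_bip_in_family (@lc_family_lc)) /=.
have orbit_split_l : split_l \in lc_orbit (K_bip n m).
  by rewrite -(lc_K_bip (inr (Ordinal m_gt0))) lc_orbit_lc ?lc_orbit_refl.
have orbit_split_r : split_r \in lc_orbit (K_bip n m).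
  by rewrite -(lc_K_bip (inl (Ordinal n_gt0))) lc_orbit_lc ?lc_orbit_refl.
apply/subsetP; apply: lc_family_ind => [|//|//|a|b|a b]; first exact: lc_orbit_refl.
- by rewrite -(lc_split_l (inl a)) lc_orbit_lc.
- by rewrite -(lc_split_r (inr b)) lc_orbit_lc.
- by rewrite -(lc_hub_r b (inl a)) lc_orbit_lc // -(lc_split_r (inr b)) lc_orbit_lc.
Qed.

Definition relabel (s : {perm 'I_n}) (t : {perm 'I_m}) (x : V) : V :=
  match x with inl i => inl (s i) | inr j => inr (t j) end.

Lemma relabel_inj s t : injective (relabel s t).
Proof. by move=> [i|j] [i'|j'] //= [] /perm_inj ->. Qed.

Ltac iso_by_cases := move=> [?|?] [?|?]; rewrite !adj_graph_of_rel /= ?permE /=; case_eqs; done.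

Lemma hub_l_iso a a' : isomorphic (hub_l a) (hub_l a').
Proof. apply: (isomorphic_inj (@relabel_inj (tperm a a') 1%g)); iso_by_cases. Qed.

Lemma hub_r_iso b b' : isomorphic (hub_r b) (hub_r b').
Proof. apply: (isomorphic_inj (@relabel_inj 1%g (tperm b b'))); iso_by_cases. Qed.

Lemma double_star_iso a a' b b' : isomorphic (double_star a b) (double_star a' b').
Proof. apply: (isomorphic_inj (@relabel_inj (tperm a a') (tperm b b'))); iso_by_cases. Qed.

Definition lc_reps a b : seq (graph V) :=
  [:: K_bip n m; split_l; split_r; hub_l a; hub_r b; double_star a b].

Lemma lc_reps_sub a b : {subset lc_reps a b <= lc_family}.
Proof.
by apply/allP; rewrite /= K_bip_in_family split_l_in_family split_r_in_family
  hub_l_in_family hub_r_in_family double_star_in_family.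
Qed.

Lemma lc_family_iso_rep a b : {in lc_family, forall G, has (isomorphic G) (lc_reps a b)}.
Proof.
apply: lc_family_ind => [|||a'|b'|a' b'] /=; rewrite ?isomorphic_refl ?orbT //.
- by rewrite hub_l_iso !orbT.
- by rewrite hub_r_iso !orbT.
- by rewrite double_star_iso !orbT.
Qed.

Lemma card_side_l : #|[set x : V | side x]| = n.
Proof.
have -> : [set x : V | side x] = inl @: setT.
  by apply/setP => -[i|j]; rewrite !inE ?imset_f //; apply/esym/imsetP => -[].
by rewrite card_imset ?cardsT ?card_ord //; apply: inl_inj.
Qed.

Lemma card_side_r : #|[set x : V | ~~ side x]| = m.
Proof.
have -> : [set x : V | ~~ side x] = inr @: setT.
  by apply/setP => -[i|j]; rewrite !inE ?imset_f //; apply/esym/imsetP => -[].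
by rewrite card_imset ?cardsT ?card_ord //; apply: inr_inj.
Qed.

Section Signatures.

Hypotheses (n_gt1 : 1 < n) (m_gt1 : 1 < m).

Ltac adjE := rewrite ?adj_K_bip ?adj_graph_of_rel /=.

(* A vertex that is not universal has a non-neighbour, and a vertex that is
   not a leaf has two neighbours, among two vertices of each side and the
   centres of the graph. *)
Ltac witnesses tac :=
  let o1 := fresh "o" in let o2 := fresh "o" in let p1 := fresh "p" in let p2 := fresh "p" in
  case: (ord_two n_gt1) => o1 [o2 ?]; case: (ord_two m_gt1) => p1 [p2 ?];
  tac ([:: inl o1; inl o2; inr p1; inr p2] : seq V).

Ltac universal_by_cases :=
  apply/setP => -[?|?]; rewrite /universal !inE /=; case_eqs;
  first [ apply/forallP => -[?|?]; adjE; case_eqs; done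
        | witnesses ltac:(fun w =>
            apply: (@forall_notall _ _ w); rewrite /=; adjE; case_eqs; done) ].

Ltac exists_among cs tac :=
  match cs with ?c :: ?cs' => first [exists c; tac | exists_among cs' tac] end.

Ltac leaves_by_cases cs :=
  apply/setP => -[?|?]; rewrite /leaves !inE /=; case_eqs;
  first [ witnesses ltac:(fun w =>
            apply: (@cards_neq1 _ _ (cs ++ w)); rewrite /= !inE; adjE; case_eqs; done)
        | apply/cards1P; exists_among cs ltac:(
            apply/setP => -[?|?]; rewrite !inE; adjE; case_eqs; done) ].

Lemma signature_K_bip : signature (K_bip n m) = (0, 0).
Proof.
rewrite /signature.
have -> : universal (K_bip n m) = set0 by universal_by_cases.
have -> : leaves (K_bip n m) = set0 by leaves_by_cases ([::] : seq V).
by rewrite cards0.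
Qed.

Lemma signature_split_l : signature split_l = (n, 0).
Proof.
rewrite /signature.
have -> : universal split_l = [set x | side x] by universal_by_cases.
have -> : leaves split_l = set0 by leaves_by_cases ([::] : seq V).
by rewrite card_side_l cards0.
Qed.

Lemma signature_split_r : signature split_r = (m, 0).
Proof.
rewrite /signature.
have -> : universal split_r = [set x | ~~ side x] by universal_by_cases.
have -> : leaves split_r = set0 by leaves_by_cases ([::] : seq V).
by rewrite card_side_r cards0.
Qed.

Lemma signature_hub_l a : signature (hub_l a) = (1, n.-1).
Proof.
rewrite /signature.
have -> : universal (hub_l a) = [set inl a] by universal_by_cases.
have -> : leaves (hub_l a) = [set x | side x] :\ inl a by leaves_by_cases [:: (inl a : V)].
rewrite cards1; congr (1, _).
have := cardsD1 (inl a) [set x : V | side x].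
rewrite card_side_l inE /=; move: #|_ :\ _| => k; lia.
Qed.

Lemma signature_hub_r b : signature (hub_r b) = (1, m.-1).
Proof.
rewrite /signature.
have -> : universal (hub_r b) = [set inr b] by universal_by_cases.
have -> : leaves (hub_r b) = [set x | ~~ side x] :\ inr b by leaves_by_cases [:: (inr b : V)].
rewrite cards1; congr (1, _).
have := cardsD1 (inr b) [set x : V | ~~ side x].
rewrite card_side_r inE /=; move: #|_ :\ _| => k; lia.
Qed.

Lemma signature_double_star a b : signature (double_star a b) = (0, n.-1 + m.-1).
Proof.
rewrite /signature.
have -> : universal (double_star a b) = set0 by universal_by_cases.
have -> : leaves (double_star a b) = ~: [set inl a; inr b]
  by leaves_by_cases [:: (inl a : V); inr b].
rewrite cards0; congr (0, _).
have := cardsC [set (inl a : V); inr b].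
rewrite cards2 card_sum !card_ord /=; move: #|_| => k; lia.
Qed.

Lemma uniq_signature_reps a b : n != m -> uniq [seq signature G | G <- lc_reps a b].
Proof.
move=> neq_nm; rewrite /= signature_K_bip signature_split_l signature_split_r.
by rewrite signature_hub_l signature_hub_r signature_double_star !inE !xpair_eqE; lia.
Qed.

End Signatures.

End Families.


Section Square.

Variable n : nat.
Local Notation V := ('I_n + 'I_n)%type.

Definition swap_sides (x : V) : V := match x with inl i => inr i | inr j => inl j end.

Lemma swap_sidesK : involutive swap_sides.
Proof. by case. Qed.

Lemma split_l_r_iso : isomorphic (split_l n n) (split_r n n).
Proof.
apply: (isomorphic_inj (inv_inj swap_sidesK)) => -[?|?] [?|?].
all: by rewrite !adj_graph_of_rel /=; case_eqs.
Qed.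

Lemma hub_l_r_iso a : isomorphic (hub_l n a) (hub_r n a).
Proof.
apply: (isomorphic_inj (inv_inj swap_sidesK)) => -[?|?] [?|?].
all: by rewrite !adj_graph_of_rel /=; case_eqs.
Qed.

Definition lc_reps_sq (a : 'I_n) : seq (graph V) :=
  [:: K_bip n n; split_r n n; hub_r n a; double_star a a].

Lemma lc_reps_sq_sub a : {subset lc_reps_sq a <= lc_family n n}.
Proof.
by apply/allP; rewrite /= K_bip_in_family split_r_in_family hub_r_in_family
  double_star_in_family.
Qed.

Lemma lc_family_iso_rep_sq a :
  {in lc_family n n, forall G, has (isomorphic G) (lc_reps_sq a)}.
Proof.
apply: lc_family_ind => [|||a'|b'|a' b'] /=; rewrite ?isomorphic_refl ?orbT //.
- by rewrite split_l_r_iso !orbT.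
- by rewrite (isomorphic_trans (hub_l_iso _ a' a) (hub_l_r_iso a)) !orbT.
- by rewrite hub_r_iso !orbT.
- by rewrite double_star_iso !orbT.
Qed.

Lemma uniq_signature_reps_sq a : 1 < n -> uniq [seq signature G | G <- lc_reps_sq a].
Proof.
move=> n_gt1; rewrite /= (signature_K_bip n_gt1 n_gt1) (signature_split_r n_gt1 n_gt1).
rewrite (signature_hub_r n_gt1 n_gt1) (signature_double_star n_gt1 n_gt1).
by rewrite !inE !xpair_eqE; lia.
Qed.

End Square.

Theorem theorem6 (n m : nat) :
  2 <= n -> 2 <= m ->
  num_iso_classes (lc_orbit (K_bip n m)) = (if n != m then 6 else 4).
Proof.
move=> n_gt1 m_gt1; rewrite /num_iso_classes (lc_orbit_K_bip (ltnW n_gt1) (ltnW m_gt1)).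
have count_classes := card_classes (@isomorphic_refl _) (@isomorphic_sym _)
  (@isomorphic_trans _) (@signature_iso _).
pose a : 'I_n := Ordinal (ltnW n_gt1); pose b : 'I_m := Ordinal (ltnW m_gt1).
case: eqVneq => [eq_nm | neq_nm] /=.
- subst m; apply: (count_classes _ _ (lc_reps_sq a)).
  + exact: lc_reps_sq_sub.
  + exact: lc_family_iso_rep_sq.
  + exact: uniq_signature_reps_sq.
- apply: (count_classes _ _ (lc_reps a b)).
  + exact: lc_reps_sub.
  + exact: lc_family_iso_rep.
  + exact: uniq_signature_reps.
Qed.
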